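(* Let $D=\operatorname{diag}(d_1,\dots,d_n)$ with $d_i>0$, and let $L\in\mathbb{R}^{N\times N}$ be symmetric with nonpositive off-diagonal entries and $L\mathbf{1}=0$. Then for every $1\le p\le\infty$, $M^+_p[-L\otimes D]=0$.
   Context: $M^+_p[f]$ denotes the strong least upper bound logarithmic Lipschitz constant on $\mathbb{R}^{nN}$ induced by the standard $p$-norm: $M^+_p[f]=\sup_{u\neq v}\lim_{h\to0^+}\frac1h\left(\frac{\|u-v+h(f(u)-f(v))\|_p}{\|u-v\|_p}-1\right)$; here the linear map $u\mapsto-(L\otimes D)u$. $\otimes$ is the Kronecker product and $\mathbf{1}=(1,\dots,1)^T$. *)

From HB Require Import structures.
From mathcomp Require Import all_boot all_order all_algebra.
From mathcomp Require Import all_classical all_reals all_analysis.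
From mathcomp Require Import mxtens.
Set Implicit Arguments. Unset Strict Implicit. Unset Printing Implicit Defensive.
Import Order.TTheory GRing.Theory Num.Theory.
Import numFieldNormedType.Exports.
Local Open Scope ring_scope.
Local Open Scope classical_set_scope.

Definition pnorm (R : realType) (p : \bar R) (k : nat) (x : 'cV[R]_k) : R :=
  match p with
  | +oo%E => \big[Num.max/0]_(i < k) `|x i 0|
  | (r%:E)%E => (\sum_(i < k) `|x i 0| `^ r) `^ (r^-1)
  | -oo%E => 0
  end.

Definition logLipM (R : realType) (p : \bar R) (k : nat)
    (f : 'cV[R]_k -> 'cV[R]_k) : \bar R :=
  ereal_sup [set x : \bar R | exists u v : 'cV[R]_k, u != v /\
     x = (lim ((fun h : R =>
            (pnorm p (u - v + h *: (f u - f v)) / pnorm p (u - v) - 1) / h)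
            @ 0^'+))%:E].

From HB Require Import structures.
From mathcomp Require Import all_boot all_order all_algebra.
From mathcomp Require Import all_classical all_reals all_analysis.
From mathcomp Require Import mxtens.
Import Order.TTheory GRing.Theory Num.Theory.
Import numFieldNormedType.Exports.
Local Open Scope ring_scope.

(* For small h > 0 the matrix 1 - h A, with A = L (x) D, is doubly stochastic:
   its entries are nonnegative and, A being symmetric with zero row sums, its
   rows and columns sum to 1.  By Jensen's inequality (finite p) or as a
   convex combination (p = oo) it does not increase any p-norm, so every
   difference quotient in M^+_p is <= 0 for small h.  The quotient vanishes
   identically for u - v = 1, a kernel vector, so the supremum is exactly 0. *)

Section Matrices.
Context {R : realType}.

Lemma jensen_powR {k : nat} {r : R} (a x : 'I_k -> R) : 1 <= r ->
  (forall j, 0 <= a j) -> (forall j, 0 <= x j) -> \sum_j a j = 1 ->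
  (\sum_j a j * x j) `^ r <= \sum_j a j * x j `^ r.
Proof.
move=> r1; elim: k a x => [|k IH] a x a0 x0.
  by rewrite big_ord0 => /eqP; rewrite eq_sym oner_eq0.
rewrite !big_ord_recr /=; set w := widen_ord (leqnSn k).
set s := \sum_(j < k) a (w j) => sum1.
have s0 : 0 <= s by rewrite sumr_ge0.
have [s_eq0|s_neq0] := eqVneq s 0.
  have aw0 j : a (w j) = 0.
    by move/eqP: s_eq0; rewrite psumr_eq0 // => /allP/(_ j (mem_index_enum _))/eqP.
  move: sum1; rewrite s_eq0 add0r => ->.
  by rewrite !big1 ?add0r ?mul1r // => j _; rewrite aw0 mul0r.
have s_gt0 : 0 < s by rewrite lt_def s_neq0.
(* renormalise the first k weights by s, then use two-point convexity of powR *)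
pose b j := a (w j) / s.
have b1 : \sum_j b j = 1 by rewrite -mulr_suml mulfV.
have sum_b f : \sum_(j < k) a (w j) * f j = s * \sum_j b j * f j.
  rewrite mulr_sumr; apply: eq_bigr => j _.
  by rewrite /b mulrA mulrCA mulfV ?mulr1.
set y := \sum_j b j * x (w j).
have y0 : 0 <= y by rewrite sumr_ge0 // => j _; rewrite mulr_ge0 ?divr_ge0.
have IHb := IH b (x \o w) (fun j => divr_ge0 (a0 _) s0) (fun j => x0 _) b1.
have amax : a ord_max = 1 - s by rewrite -sum1 addrC addrK.
have s_le1 : s <= 1 by rewrite -sum1 lerDl.
rewrite (sum_b (x \o w)) (sum_b (fun j => x (w j) `^ r)) amax.
have := @convex_powR R r r1 (Itv01 s0 s_le1) y (x ord_max).
rewrite !inE /= !in_itv /= !andbT => /(_ y0 (x0 _)); rewrite !convRE /=.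
by move/le_trans; apply; rewrite lerD2r ler_wpM2l.
Qed.

Definition doubly_stochastic {k : nat} (P : 'M[R]_k) :=
  [/\ forall i j, 0 <= P i j, forall i, \sum_j P i j = 1
    & forall j, \sum_i P i j = 1].

Lemma norm_mulmx_nonneg_le {k : nat} (P : 'M[R]_k) (w : 'cV[R]_k) i :
  (forall i j, 0 <= P i j) -> `|(P *m w) i 0| <= \sum_j P i j * `|w j 0|.
Proof.
move=> P0; rewrite mxE; apply: le_trans (ler_norm_sum _ _ _) _.
by apply: ler_sum => j _; rewrite normrM ger0_norm.
Qed.

Lemma pnorm_fin_doubly_stochastic_le {k : nat} (P : 'M[R]_k) (r : R)
    (w : 'cV[R]_k) :
  1 <= r -> doubly_stochastic P -> pnorm r%:E (P *m w) <= pnorm r%:E w.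
Proof.
move=> r1 [P0 Prow Pcol]; rewrite /pnorm.
have r0 : 0 <= r := le_trans ler01 r1.
apply: ge0_ler_powR; rewrite ?invr_ge0 ?nnegrE //;
  try by apply: sumr_ge0 => i _; rewrite powR_ge0.
apply: (@le_trans _ _ (\sum_i \sum_j P i j * `|w j 0| `^ r)).
  apply: ler_sum => i _.
  apply: le_trans (jensen_powR (P i) (fun j => `|w j 0|) r1 (P0 i) _ (Prow i)) => //.
  apply: ge0_ler_powR; rewrite ?nnegrE ?norm_mulmx_nonneg_le //.
  by apply: sumr_ge0 => j _; rewrite mulr_ge0.
by rewrite exchange_big /=; apply: ler_sum => j _; rewrite -mulr_suml Pcol mul1r.
Qed.

Lemma pnorm_oo_row_stochastic_le {k : nat} (P : 'M[R]_k) (w : 'cV[R]_k) :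
  (forall i j, 0 <= P i j) -> (forall i, \sum_j P i j = 1) ->
  pnorm +oo%E (P *m w) <= pnorm +oo%E w.
Proof.
move=> P0 Prow; rewrite /pnorm; set m := \big[Num.max/0]_(i < k) `|w i 0|.
apply: bigmax_le => [|i _]; first by rewrite /m bigmax_idl le_max lexx.
apply: le_trans (norm_mulmx_nonneg_le P w i P0) _.
rewrite -[m]mul1r -(Prow i) mulr_suml; apply: ler_sum => j _.
by rewrite ler_wpM2l //; exact: (le_bigmax _ (fun j => `|w j 0|) j).
Qed.

Lemma pnorm_doubly_stochastic_le {k : nat} (P : 'M[R]_k) (p : \bar R)
    (w : 'cV[R]_k) :
  (1%:E <= p)%E -> doubly_stochastic P -> pnorm p (P *m w) <= pnorm p w.
Proof.
case: p => [r| |] //= p1 PP; first by apply: pnorm_fin_doubly_stochastic_le.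
by case: PP => P0 Prow _; exact: pnorm_oo_row_stochastic_le.
Qed.

Lemma pnorm_gt0 {k : nat} (p : \bar R) (w : 'cV[R]_k) :
  (1%:E <= p)%E -> w != 0 -> 0 < pnorm p w.
Proof.
move=> p1 /eqP w_neq0.
have [i wi] : exists i, w i 0 != 0.
  apply/not_existsP => w0; apply/w_neq0/matrixP => i j.
  by rewrite ord1 mxE; apply/eqP/negPn/negP/w0.
have wi_gt0 : 0 < `|w i 0| by rewrite normr_gt0.
case: p p1 => [r| |] //= p1.
  apply/powR_gt0/(lt_le_trans (powR_gt0 r wi_gt0)).
  by rewrite (bigD1 i) //= lerDl sumr_ge0 // => j _; rewrite powR_ge0.
exact: lt_le_trans wi_gt0 (le_bigmax _ (fun j => `|w j 0|) i).
Qed.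

Definition laplacian {k : nat} (M : 'M[R]_k) :=
  [/\ M^T = M, M *m const_mx 1 = 0 :> 'cV_k
    & forall i j, i != j -> M i j <= 0].

Lemma laplacian_tens_diag (N n : nat) (L : 'M[R]_N) (d : 'rV[R]_n) :
  laplacian L -> (forall i, 0 <= d 0 i) -> laplacian (L *t diag_mx d).
Proof.
move=> [LT L1 Loff] d0; split.
- by rewrite trmx_tens LT tr_diag_mx.
- have -> : const_mx 1 = (const_mx 1 : 'cV[R]_N) *t (const_mx 1 : 'cV[R]_n).
    by apply/matrixP => i j; rewrite !mxE mulr1.
  have := tensmx_mul L (diag_mx d) (const_mx 1 : 'cV[R]_N) (const_mx 1 : 'cV[R]_n).
  by rewrite L1 tens0mx.
- move=> i j; case: (mxtens_indexP i) => i1 i2; case: (mxtens_indexP j) => j1 j2.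
  rewrite tensmxE mxE; have [<- {j1}|i1j1 _] := eqVneq i1 j1.
    by have [<-|_ _] := eqVneq i2 j2; rewrite ?eqxx // mulr0n mulr0.
  by rewrite mulr_le0_ge0 ?Loff ?mulrn_wge0.
Qed.

Lemma row_sum_mulmx_const1 {k : nat} (P : 'M[R]_k) i :
  \sum_j P i j = (P *m (const_mx 1 : 'cV_k)) i 0.
Proof. by rewrite mxE; apply: eq_bigr => j _; rewrite mxE mulr1. Qed.

(* h0 = 1 / (1 + \sum_i |M i i|) keeps the diagonal of 1 - h M nonnegative *)
Lemma laplacian_step_doubly_stochastic {k : nat} (M : 'M[R]_k) :
  laplacian M -> exists2 h0, 0 < h0 &
    forall h, 0 < h -> h <= h0 -> doubly_stochastic (1%:M - h *: M).
Proof.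
move=> [MT M1 Moff]; set S := \sum_i `|M i i|.
have S_ge0 : 0 <= S by rewrite sumr_ge0.
have S1_gt0 : 0 < 1 + S by rewrite ltr_wpDr.
exists (1 + S)^-1; first by rewrite invr_gt0.
move=> h h_gt0 h_le.
have row1 i : \sum_j (1%:M - h *: M) i j = 1.
  by rewrite row_sum_mulmx_const1 mulmxBl mul1mx -scalemxAl M1 scaler0 subr0 mxE.
split=> // [i j|j]; last first.
  by rewrite -[RHS](row1 j); apply: eq_bigr => i _; rewrite !mxE -{1}MT mxE eq_sym.
rewrite !mxE; have [<- {j}|ij] := eqVneq i j; last first.
  by rewrite mulr0n sub0r oppr_ge0 mulr_ge0_le0 ?Moff ?ltW.
rewrite mulr1n subr_ge0; apply: le_trans (ler_norm _) _.
rewrite normrM gtr0_norm // -(mulVf (lt0r_neq0 S1_gt0)).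
apply: ler_pM => //; first exact: ltW.
by rewrite ler_wpDl // /S (bigD1 i) //= lerDl sumr_ge0.
Qed.

End Matrices.

Section LogLipschitz.
Variables (R : realType) (p : \bar R) (k : nat).
Hypothesis p_ge1 : (1%:E <= p)%E.

Lemma logLipM_le0 (f : 'cV[R]_k -> 'cV[R]_k) :
  (exists2 h0, 0 < h0 & forall h, 0 < h -> h <= h0 -> forall u v,
     pnorm p (u - v + h *: (f u - f v)) <= pnorm p (u - v)) ->
  (logLipM p f <= 0)%E.
Proof.
move=> [h0 h0_gt0 contr]; apply: ge_ereal_sup => _ [u [v [uv ->]]].
rewrite lee_fin; set F := fun h : R => _.
(* a divergent quotient contributes lim = 0, so only the convergent case matters *)
have [cvF|dvF] := pselect (cvg (F @ 0^'+)%classic); last by rewrite dvgP.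
apply: limr_le => //.
have uv_gt0 : 0 < pnorm p (u - v) by rewrite pnorm_gt0 // subr_eq0.
near=> h.
have h_gt0 : 0 < h by near: h; exact: nbhs_right_gt.
have h_le : h <= h0 by near: h; exact: nbhs_right_le.
rewrite /F pmulr_lle0 ?invr_gt0 // subr_le0 ler_pdivrMr // mul1r.
exact: contr.
Unshelve. all: by end_near.
Qed.

Lemma logLipM_ge0 (f : 'cV[R]_k -> 'cV[R]_k) (u v : 'cV[R]_k) :
  u != v -> f u = f v -> (0 <= logLipM p f)%E.
Proof.
move=> uv fuv; apply: ereal_sup_ubound; exists u, v; split => //.
have uv_gt0 : 0 < pnorm p (u - v) by rewrite pnorm_gt0 // subr_eq0.
rewrite (_ : (fun h : R => _) = fun => 0) ?lim_cst //.
by apply/funext => h; rewrite fuv subrr scaler0 addr0 divff ?gt_eqF // subrr mul0r.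
Qed.

Lemma logLipM_neg_laplacian (M : 'M[R]_k) :
  (0 < k)%N -> laplacian M -> logLipM p (fun u => - (M *m u)) = 0%E.
Proof.
move=> k_gt0 LM; have [_ M1 _] := LM.
apply/le_anti/andP; split.
- apply: logLipM_le0.
  have [h0 h0_gt0 stoch] := laplacian_step_doubly_stochastic M LM.
  exists h0 => // h h_gt0 h_le u v.
  have -> : u - v + h *: (- (M *m u) - - (M *m v)) = (1%:M - h *: M) *m (u - v).
    rewrite mulmxBl mul1mx -scalemxAl mulmxBr opprK -scalerN opprB.
    by congr (_ + _ *: _); exact: addrC.
  by apply: pnorm_doubly_stochastic_le => //; exact: stoch.
- apply: (@logLipM_ge0 _ (const_mx 1) 0); last by rewrite M1 mulmx0.
  apply/eqP => /matrixP/(_ (Ordinal k_gt0) 0); rewrite !mxE => /eqP.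
  by rewrite oner_eq0.
Qed.

End LogLipschitz.

Theorem proposition4 (R : realType) (n N : nat) (d : 'rV[R]_n)
    (L : 'M[R]_N) (p : \bar R) :
  (0 < n)%N -> (0 < N)%N ->
  (forall i, 0 < d 0 i) ->
  L^T = L ->
  (forall i j : 'I_N, i != j -> L i j <= 0) ->
  L *m const_mx 1 = 0 :> 'cV[R]_N ->
  (1%:E <= p)%E ->
  logLipM p (fun u : 'cV[R]_(N * n) => - ((L *t diag_mx d) *m u)) = 0%E.
Proof.
move=> n_gt0 N_gt0 d_gt0 LT Loff L1 p1.
apply: logLipM_neg_laplacian => //; first by rewrite muln_gt0 N_gt0.
by apply: laplacian_tens_diag => [|i]; [split | exact/ltW].
Qed.
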